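(* There are no rational numbers (in particular, no integers) $x_1,x_2,x_3,d_1,d_2,d_3,L$ such that $\operatorname{rank}N\le 2$, $\operatorname{rank}N_1=2$, $\operatorname{rank}N_2=1$, and $\tilde p_2=\tilde p_3=\dots=\tilde p_8=0$. Likewise there are no such rational numbers with $\operatorname{rank}N\le 2$, $\operatorname{rank}N_1=2$, $\operatorname{rank}N_2=1$ satisfying $p_1=p_2=p_3=0$.
   Context: Define $p_1=x_2^2+x_3^2-d_1^2$, $p_2=x_3^2+x_1^2-d_2^2$, $p_3=x_1^2+x_2^2-d_3^2$, and $\tilde p_2=p_1+p_2+p_3$, $\tilde p_3=d_1p_1+d_2p_2+d_3p_3$, $\tilde p_4=x_1p_1+x_2p_2+x_3p_3$, $\tilde p_5=x_1d_1p_1+x_2d_2p_2+x_3d_3p_3$, $\tilde p_6=x_1^2p_1+x_2^2p_2+x_3^2p_3$, $\tilde p_7=d_1^2p_1+d_2^2p_2+d_3^2p_3$, $\tilde p_8=x_1^2d_1^2p_1+x_2^2d_2^2p_2+x_3^2d_3^2p_3$. $N$ is the $3\times 7$ matrix whose $i$-th row is $(1,\ d_i,\ x_i,\ x_id_i,\ x_i^2,\ d_i^2,\ x_i^2d_i^2)$; $N_1$ is the $3\times 2$ matrix with rows $(1,d_i)$; $N_2$ is the $3\times 2$ matrix with rows $(1,x_i)$, $i=1,2,3$. Ranks are over $\mathbb{Q}$. *)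

From HB Require Import structures.
From mathcomp Require Import all_boot all_order all_algebra.
Set Implicit Arguments. Unset Strict Implicit. Unset Printing Implicit Defensive.
Import Order.TTheory GRing.Theory Num.Theory.
Local Open Scope ring_scope.

Definition trip (a1 a2 a3 : rat) (i : 'I_3) : rat := nth 0 [:: a1; a2; a3] i.

Definition p1 (x1 x2 x3 d1 d2 d3 : rat) : rat := x2^+2 + x3^+2 - d1^+2.
Definition p2 (x1 x2 x3 d1 d2 d3 : rat) : rat := x3^+2 + x1^+2 - d2^+2.
Definition p3 (x1 x2 x3 d1 d2 d3 : rat) : rat := x1^+2 + x2^+2 - d3^+2.

Definition wsum (w1 w2 w3 x1 x2 x3 d1 d2 d3 : rat) : rat :=
  w1 * p1 x1 x2 x3 d1 d2 d3 + w2 * p2 x1 x2 x3 d1 d2 d3 + w3 * p3 x1 x2 x3 d1 d2 d3.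

Definition pt2 x1 x2 x3 d1 d2 d3 := wsum 1 1 1 x1 x2 x3 d1 d2 d3.
Definition pt3 x1 x2 x3 d1 d2 d3 := wsum d1 d2 d3 x1 x2 x3 d1 d2 d3.
Definition pt4 x1 x2 x3 d1 d2 d3 := wsum x1 x2 x3 x1 x2 x3 d1 d2 d3.
Definition pt5 x1 x2 x3 d1 d2 d3 := wsum (x1*d1) (x2*d2) (x3*d3) x1 x2 x3 d1 d2 d3.
Definition pt6 x1 x2 x3 d1 d2 d3 := wsum (x1^+2) (x2^+2) (x3^+2) x1 x2 x3 d1 d2 d3.
Definition pt7 x1 x2 x3 d1 d2 d3 := wsum (d1^+2) (d2^+2) (d3^+2) x1 x2 x3 d1 d2 d3.
Definition pt8 x1 x2 x3 d1 d2 d3 :=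
  wsum (x1^+2*d1^+2) (x2^+2*d2^+2) (x3^+2*d3^+2) x1 x2 x3 d1 d2 d3.

Definition Nmx (x1 x2 x3 d1 d2 d3 : rat) : 'M[rat]_(3, 7) :=
  \matrix_(i < 3, j < 7)
    let x := trip x1 x2 x3 i in let d := trip d1 d2 d3 i in
    nth 0 [:: 1; d; x; x * d; x^+2; d^+2; x^+2 * d^+2] j.

Definition N1mx (d1 d2 d3 : rat) : 'M[rat]_(3, 2) :=
  \matrix_(i < 3, j < 2) nth 0 [:: 1; trip d1 d2 d3 i] j.

Definition N2mx (x1 x2 x3 : rat) : 'M[rat]_(3, 2) :=
  \matrix_(i < 3, j < 2) nth 0 [:: 1; trip x1 x2 x3 i] j.

From HB Require Import structures.
From mathcomp Require Import all_boot all_order all_algebra.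
From mathcomp Require Import ring.
Set Implicit Arguments. Unset Strict Implicit. Unset Printing Implicit Defensive.
Import GRing.Theory Num.Theory.
Local Open Scope ring_scope.

(* Both parts of the theorem reduce to the irrationality of sqrt 2.
   - A 3x2 matrix with a constant first column 1 has rank <= 1 only if its
     second column is constant (a 2x2 minor (1 a; 1 b) has determinant b - a).
     Hence rank N2 = 1 forces x1 = x2 = x3 =: x, and then p_i = 2x^2 - d_i^2.
   - In part two p_i = 0 directly gives d_i^2 = 2x^2.  In part one only
     pt2 = sum (2x^2 - d_i^2) and pt7 = sum d_i^2 (2x^2 - d_i^2) are needed:
     over any ordered ring, sum (a_i - t) = 0 and sum a_i (t - a_i) = 0 give
     sum (a_i - t)^2 = 0, so again every d_i^2 = 2x^2.
   - Over the rationals d^2 = 2x^2 forces x = 0 (compare the 2-adic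
     valuations of numerators), hence all d_i = 0; then every row of N1 is
     (1, 0), so rank N1 <= 1, contradicting rank N1 = 2. *)

Lemma det_mx22 (F : comPzRingType) (A : 'M[F]_2) :
  \det A = A 0 0 * A 1 1 - A 0 1 * A 1 0.
Proof.
rewrite (expand_det_row _ 0) !big_ord_recr big_ord0 /= add0r /cofactor !det_mx11.
rewrite !mxE /= expr0 expr1 mul1r mulN1r mulrN.
by congr (A _ _ * A _ _ - A _ _ * A _ _); apply: val_inj.
Qed.

(* A matrix whose first column is constantly 1 and whose rank is at most 1
   has a constant second column: otherwise two of its rows form an
   invertible 2x2 submatrix. *)
Lemma rank_le1_unit_col (F : fieldType) m (M : 'M[F]_(m, 2)) :
  (forall i, M i 0 = 1) -> (\rank M <= 1)%N -> forall i j, M i 1 = M j 1.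
Proof.
move=> M_0 rkM i j; apply/eqP; move: rkM; apply: contraTT => neq_ij.
rewrite -ltnNge.
pose A := rowsub (fun k : 'I_2 => if k == 0 then i else j) M.
have detA : \det A = M j 1 - M i 1 by rewrite det_mx22 !mxE /= !M_0 mul1r mulr1.
have unitA : A \in unitmx by rewrite unitmxE detA unitfE subr_eq0 eq_sym.
have subA : (A <= M)%MS := rowsub_sub _ M.
by have := mxrankS subA; rewrite mxrank_unit.
Qed.

Lemma rank_le1_const_rows (F : fieldType) m n (M : 'M[F]_(m, n)) (r : 'rV[F]_n) :
  (forall i j, M i j = r 0 j) -> (\rank M <= 1)%N.
Proof.
move=> M_r; have -> : M = const_mx 1 *m r.
  by apply/matrixP => i j; rewrite M_r !mxE big_ord1 !mxE mul1r.
exact: leq_trans (mxrankM_maxr _ _) (rank_leq_row _).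
Qed.

Lemma sqr_sum3_eq0 (R : realDomainType) (a b c : R) :
  a ^+ 2 + b ^+ 2 + c ^+ 2 = 0 -> [/\ a = 0, b = 0 & c = 0].
Proof.
move/eqP; rewrite paddr_eq0 ?addr_ge0 ?sqr_ge0 // paddr_eq0 ?sqr_ge0 //.
by rewrite !sqrf_eq0 => /andP[/andP[/eqP-> /eqP->] /eqP->].
Qed.

(* If the a_i balance around t both plainly and weighted by a_i, then
   sum (a_i - t)^2 = t * sum (t - a_i) - sum a_i (t - a_i) = 0, so a_i = t. *)
Lemma balanced_eq (R : realDomainType) (t a1 a2 a3 : R) :
  (t - a1) + (t - a2) + (t - a3) = 0 ->
  a1 * (t - a1) + a2 * (t - a2) + a3 * (t - a3) = 0 ->
  [/\ a1 = t, a2 = t & a3 = t].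
Proof.
move=> sum0 wsum0.
have devs0 : (a1 - t) ^+ 2 + (a2 - t) ^+ 2 + (a3 - t) ^+ 2 = 0.
  have -> : (a1 - t) ^+ 2 + (a2 - t) ^+ 2 + (a3 - t) ^+ 2 =
    t * ((t - a1) + (t - a2) + (t - a3))
    - (a1 * (t - a1) + a2 * (t - a2) + a3 * (t - a3)) by ring.
  by rewrite sum0 wsum0 mulr0 subr0.
have [/eqP + /eqP + /eqP] := sqr_sum3_eq0 devs0.
by rewrite !subr_eq0 => /eqP-> /eqP-> /eqP->.
Qed.

(* 2 a^2 = b^2 in nat forces a = 0: the 2-adic valuations would have
   different parities. *)
Lemma nat_sq_eq_double_sq (a b : nat) : (2 * a ^ 2 = b ^ 2)%N -> a = 0%N.
Proof.
move=> eq_ab; case: (posnP a) => [//|a_gt0].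
have b_gt0 : (0 < b)%N.
  by rewrite -(ltn_exp2r _ _ (isT : 0 < 2)%N) -eq_ab muln_gt0 expn_gt0 a_gt0.
have := congr1 (logn 2) eq_ab.
rewrite lognM // ?expn_gt0 ?a_gt0 // !lognX (lognE 2 2) /= => /(congr1 odd).
by rewrite divnn logn1 oddD !oddM.
Qed.

(* The irrationality of sqrt 2: d^2 = 2 x^2 in rat forces x = 0, by clearing
   denominators and applying the integer statement to the numerators. *)
Lemma rat_sq_eq_double_sq (x d : rat) : d ^+ 2 = x ^+ 2 + x ^+ 2 -> x = 0.
Proof.
move=> eq_dx; pose a := numq x * denq d; pose b := numq d * denq x.
have eq_ab : b ^+ 2 = 2 * a ^+ 2.
  apply: (@intr_inj rat); rewrite /a /b !rmorphM /= !numqE.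
  pose D : rat := (denq x)%:~R * (denq d)%:~R.
  transitivity (d ^+ 2 * D ^+ 2); first by rewrite /D; ring.
  by rewrite eq_dx /D (_ : 2%:~R = 2 :> rat) //; ring.
have /nat_sq_eq_double_sq /eqP : (2 * `|a| ^ 2 = `|b| ^ 2)%N.
  by rewrite -!abszX eq_ab abszM.
by rewrite absz_eq0 mulf_eq0 denq_eq0 orbF numq_eq0 => /eqP.
Qed.

Lemma N2mx_rank1_eq (x1 x2 x3 : rat) :
  \rank (N2mx x1 x2 x3) = 1%N -> x2 = x1 /\ x3 = x1.
Proof.
move=> rk1; have col0 (i : 'I_3) : N2mx x1 x2 x3 i 0 = 1 by rewrite mxE.
have same := rank_le1_unit_col col0 (eq_leq rk1).
by have := same 1 0; have := same 2 0; rewrite !mxE.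
Qed.

Lemma N1mx0_rank_le1 : (\rank (N1mx 0 0 0) <= 1)%N.
Proof.
apply: (rank_le1_const_rows (r := \row_(j < 2) (j == 0)%:R)) => i j.
rewrite !mxE /trip (_ : [:: 0; 0; 0] = nseq 3 (0 : rat)) // nth_nseq if_same.
by case: j => [[|[|j]] lt_j2].
Qed.

Lemma N1mx_double_squares_rank_le1 (x d1 d2 d3 : rat) :
  d1 ^+ 2 = x ^+ 2 + x ^+ 2 -> d2 ^+ 2 = x ^+ 2 + x ^+ 2 ->
  d3 ^+ 2 = x ^+ 2 + x ^+ 2 -> (\rank (N1mx d1 d2 d3) <= 1)%N.
Proof.
move=> e1 e2 e3; have x0 := rat_sq_eq_double_sq e1.
have d0 (d : rat) : d ^+ 2 = x ^+ 2 + x ^+ 2 -> d = 0.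
  by rewrite x0 expr0n addr0 => /eqP; rewrite sqrf_eq0 => /eqP.
by rewrite (d0 _ e1) (d0 _ e2) (d0 _ e3); exact: N1mx0_rank_le1.
Qed.

Theorem theorem4p1 :
  (~ exists x1 x2 x3 d1 d2 d3 L : rat,
       [/\ (\rank (Nmx x1 x2 x3 d1 d2 d3) <= 2)%N,
           \rank (N1mx d1 d2 d3) = 2%N,
           \rank (N2mx x1 x2 x3) = 1%N &
           (pt2 x1 x2 x3 d1 d2 d3 = 0 /\ pt3 x1 x2 x3 d1 d2 d3 = 0 /\
            pt4 x1 x2 x3 d1 d2 d3 = 0 /\ pt5 x1 x2 x3 d1 d2 d3 = 0 /\
            pt6 x1 x2 x3 d1 d2 d3 = 0 /\ pt7 x1 x2 x3 d1 d2 d3 = 0 /\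
            pt8 x1 x2 x3 d1 d2 d3 = 0)]) /\
  (~ exists x1 x2 x3 d1 d2 d3 L : rat,
       [/\ (\rank (Nmx x1 x2 x3 d1 d2 d3) <= 2)%N,
           \rank (N1mx d1 d2 d3) = 2%N,
           \rank (N2mx x1 x2 x3) = 1%N &
           [/\ p1 x1 x2 x3 d1 d2 d3 = 0, p2 x1 x2 x3 d1 d2 d3 = 0 &
               p3 x1 x2 x3 d1 d2 d3 = 0]]).
Proof.
split.
- case=> x [x2 [x3 [d1 [d2 [d3 [_ [_ rkN1 rkN2 [pt2_0 [_ [_ [_ [_ [pt7_0 _]]]]]]]]]]]]].
  move: pt2_0 pt7_0; have [-> ->] := N2mx_rank1_eq rkN2.
  rewrite /pt2 /pt7 /wsum /p1 /p2 /p3 !mul1r => pt2_0 pt7_0.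
  have [e1 e2 e3] := balanced_eq pt2_0 pt7_0.
  by have := N1mx_double_squares_rank_le1 e1 e2 e3; rewrite rkN1.
- case=> x [x2 [x3 [d1 [d2 [d3 [_ [_ rkN1 rkN2 [p1_0 p2_0 p3_0]]]]]]]].
  move: p1_0 p2_0 p3_0; have [-> ->] := N2mx_rank1_eq rkN2 => p1_0 p2_0 p3_0.
  have sq_eq (d : rat) : x ^+ 2 + x ^+ 2 - d ^+ 2 = 0 -> d ^+ 2 = x ^+ 2 + x ^+ 2.
    by move/eqP; rewrite subr_eq0 => /eqP.
  have := N1mx_double_squares_rank_le1 (sq_eq _ p1_0) (sq_eq _ p2_0) (sq_eq _ p3_0).
  by rewrite rkN1.
Qed.
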